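(* Let $\Bbbk$ be an algebraically closed field of characteristic zero, let $p_0=0\le p_1\le\dots\le p_{m+n}$ be integers, and let $\Upsilon=(|1|,\dots,|m+n|)$ be a sequence consisting of $m$ zeros and $n$ ones. Given $a_i^{(r)}\in\Bbbk$ for $1\le i\le m+n$ and $1\le r\le p_i-p_{i-1}$, there exist $b_{i,j}\in\Bbbk$ for $1\le i\le m+n$, $1\le j\le p_i$, such that $$b_{i,p_i-p_{i-1}+r}=b_{i-1,r}\quad\text{for }1\le r\le p_{i-1},$$ $$e_r\big((-1)^{|i|}b_{i,1},\dots,(-1)^{|i|}b_{i,p_i}\big)=(-1)^{r|i|}a_i^{(r)}\quad\text{for }1\le r\le p_i-p_{i-1},$$ where $e_r$ denotes the $r$-th elementary symmetric polynomial. *)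

From HB Require Import structures.
From mathcomp Require Import all_boot all_order all_algebra.
Set Implicit Arguments. Unset Strict Implicit. Unset Printing Implicit Defensive.
Import Order.TTheory GRing.Theory Num.Theory.
Local Open Scope ring_scope.

Definition elsym (R : comNzRingType) (r : nat) (s : seq R) : R :=
  \sum_(I : {set 'I_(size s)} | #|I| == r) \prod_(i in I) s`_i.

From HB Require Import structures.
From mathcomp Require Import all_boot all_order all_algebra zify.
Import GRing.Theory.
Set Implicit Arguments. Unset Strict Implicit. Unset Printing Implicit Defensive.
Local Open Scope ring_scope.

(* The rows b_i are built one at a time, b_i being a new block x of length
   d = p_i - p_(i-1) followed by c = b_(i-1).  Up to the signs (-1)^r, the numbers
   e_r(x ++ c) are the top coefficients of \prod_(z <- x ++ c) ('X - z).  So take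
   the monic T of degree p_i whose top d coefficients are prescribed and divide
   it by \prod_(z <- c) ('X - z): the quotient is monic of degree d and its
   product with the divisor agrees with T in all degrees >= size c, because the
   remainder is smaller; over an algebraically closed field its roots give x.
   The twists by (-1)^|i| cancel because e_r(u s) = u^r e_r(s), so neither the
   characteristic nor the parity sequence plays any role. *)

Lemma coef_divpMmonic (F : fieldType) (p q : {poly F}) (i : nat) :
  q \is monic -> (size q <= i.+1)%N -> (p %/ q * q)`_i = p`_i.
Proof.
move=> mon_q le_q_i.
rewrite [in RHS](divp_eq p q) coefD [(p %% q)`_i]nth_default ?addr0 //.
by rewrite -ltnS (leq_trans (ltn_modpN0 _ (monic_neq0 mon_q))).
Qed.

Lemma monic_divp (F : fieldType) (p q : {poly F}) :
  p \is monic -> q \is monic -> (size q <= size p)%N -> p %/ q \is monic.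
Proof.
move=> mon_p mon_q le_qp; rewrite -(monicMr _ mon_q); apply/monicP.
have -> : p %/ q * q = p - p %% q by rewrite {2}(divp_eq p q) addrK.
rewrite lead_coefDl ?(monicP mon_p) // size_polyN.
exact: leq_trans (ltn_modpN0 _ (monic_neq0 mon_q)) le_qp.
Qed.

Lemma closed_monic_prod_XsubC (k : closedFieldType) (q : {poly k}) :
  q \is monic ->
  exists2 x : seq k, size x = (size q).-1 & q = \prod_(z <- x) ('X - z%:P).
Proof.
move=> mon_q; have [x def_q] := closed_field_poly_normal q.
rewrite (monicP mon_q) scale1r in def_q.
by exists x; rewrite // def_q size_prod_XsubC.
Qed.

Lemma coef_prod_XsubC_elsym (R : comNzRingType) (s : seq R) (r : nat) :
  (r <= size s)%N ->
  (\prod_(z <- s) ('X - z%:P))`_(size s - r) = (-1) ^+ r * elsym r s.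
Proof. by move=> le_r_s; rewrite coef_prod_XsubC ?leq_subr // subKn. Qed.

Lemma elsym_scale (R : comNzRingType) (c : R) (s : seq R) (r : nat) :
  elsym r [seq c * z | z <- s] = c ^+ r * elsym r s.
Proof.
rewrite /elsym size_map mulr_sumr; apply: eq_bigr => I /eqP <-.
rewrite -prodr_const -big_split; apply: eq_bigr => i _.
by rewrite (nth_map 0).
Qed.

Lemma map_iota1_nth (T U : Type) (x0 : T) (f : T -> U) (s : seq T) :
  [seq f (nth x0 s j.-1) | j <- iota 1 (size s)] = map f s.
Proof. by rewrite (iotaDl 1 0) -map_comp (map_comp f) map_nth_iota0 ?take_size. Qed.

Lemma exists_prefix_elsym (k : closedFieldType) (c : seq k) (d : nat) (t : nat -> k) :
  exists2 x : seq k, size x = d &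
    forall r, (0 < r <= d)%N -> elsym r (x ++ c) = t r.
Proof.
set N := (d + size c)%N.
pose T : {poly k} :=
  \poly_(i < N.+1) ((-1) ^+ (N - i)%N * (if i == N then 1 else t (N - i)%N)).
pose Pc := \prod_(z <- c) ('X - z%:P).
have mon_Pc : Pc \is monic by apply: monic_prod_XsubC.
have size_Pc : size Pc = (size c).+1 by rewrite size_prod_XsubC.
have size_T : size T = N.+1 by rewrite size_poly_eq // subnn eqxx mulr1 oner_neq0.
have mon_T : T \is monic.
  by apply/monicP; rewrite lead_coefE size_T coef_poly ltnSn subnn eqxx mulr1.
have le_Pc_T : (size Pc <= size T)%N by rewrite size_Pc size_T ltnS leq_addl.
have size_Q : size (T %/ Pc) = d.+1.
  by rewrite size_divp ?monic_neq0 // size_T size_Pc /N -addSn addnK.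
have [x size_x def_Q] := closed_monic_prod_XsubC (monic_divp mon_T mon_Pc le_Pc_T).
rewrite size_Q /= in size_x; exists x => // r /andP[r_gt0 le_r_d].
have size_xc : size (x ++ c) = N by rewrite size_cat size_x.
have le_r_N : (r <= N)%N by rewrite (leq_trans le_r_d) ?leq_addr.
apply: (can_inj (signrMK r)).
rewrite -coef_prod_XsubC_elsym size_xc // big_cat -def_Q.
rewrite coef_divpMmonic //; last by rewrite size_Pc; lia.
rewrite coef_poly subKn // ifT; last by lia.
by rewrite ifF //; apply/eqP; lia.
Qed.

Lemma exists_elsym_chain (k : closedFieldType) (d : nat -> nat)
    (a : nat -> nat -> k) (N : nat) :
  exists B : nat -> seq k, B 0%N = [::] /\
    forall i, (0 < i <= N)%N -> exists2 x, size x = d i &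
      B i = x ++ B i.-1 /\ forall r, (0 < r <= d i)%N -> elsym r (B i) = a i r.
Proof.
elim: N => [|N [B [B0 chainB]]]; first by exists (fun=> [::]); split=> // -[].
have [x size_x elsym_x] := exists_prefix_elsym (B N) (d N.+1) (a N.+1).
exists (fun i => if i == N.+1 then x ++ B N else B i); split=> // i /andP[i_gt0].
rewrite leq_eqVlt => /orP[/eqP-> | lt_i_N].
  by exists x; rewrite // eqxx ltn_eqF.
rewrite (ltn_eqF lt_i_N) (ltn_eqF (leq_ltn_trans (leq_pred i) lt_i_N)).
by apply: chainB; rewrite i_gt0 -ltnS.
Qed.

Theorem mainTheorem8 (k : closedFieldType) (hchar : [pchar k] =i pred0)
  (m n : nat) (p : nat -> nat) (hp0 : p 0%N = 0%N)
  (hpmono : forall i : nat, (1 <= i <= m + n)%N -> (p i.-1 <= p i)%N)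
  (ups : nat -> bool)
  (hups : (\sum_(1 <= i < (m + n).+1) (ups i : nat))%N = n)
  (a : nat -> nat -> k) :
  exists b : nat -> nat -> k,
    (forall i : nat, (1 <= i <= m + n)%N ->
       forall r : nat, (1 <= r <= p i.-1)%N ->
         b i ((p i - p i.-1) + r)%N = b i.-1 r) /\
    (forall i : nat, (1 <= i <= m + n)%N ->
       forall r : nat, (1 <= r <= p i - p i.-1)%N ->
         elsym r [seq (-1) ^+ ups i * b i j | j <- iota 1 (p i)]
           = (-1) ^+ (r * ups i)%N * a i r).
Proof.
have [B [B0 chainB]] := exists_elsym_chain (fun i => p i - p i.-1)%N a (m + n).
have size_B i : (i <= m + n)%N -> size (B i) = p i.
  elim: i => [|i IHi] le_i; first by rewrite B0 hp0.
  have [x size_x [-> _]] := chainB i.+1 le_i.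
  by rewrite size_cat size_x /= IHi 1?ltnW // subnK //; apply: hpmono.
exists (fun i j => nth 0 (B i) j.-1); split=> i le_i r.
  case: r => [//|r] _; have [x size_x [-> _]] := chainB i le_i.
  by rewrite addnS /= nth_cat size_x ltnNge leq_addr /= addKn.
move=> le_r; have [x _ [_ elsym_B]] := chainB i le_i.
rewrite -(size_B i (andP le_i).2) map_iota1_nth elsym_scale.
by rewrite mulnC exprM elsym_B.
Qed.
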